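(* Let $G=(V_1,E_1)$ and $H=(V_2,E_2)$ be digraphs and let $P$ be any one of the following properties: Taylor; $\operatorname{SD}(\wedge)$; Hobby–McKenzie; $\operatorname{SD}(\vee)$; congruence modular (CM); congruence $n$-permutable for some $n$ (C$n$P); congruence distributive (CD); $\operatorname{SD}(\vee)$ and C$n$P; C$n$P and CM; CD and C$n$P; congruence $3$-permutable (C3P); CD and C3P; Maltsev; arithmetical (CD and Maltsev). If both $G$ and $H$ have $P$, then so do $G\mathbin{\dot\cup}H$ and $G\mathbin{\overline{\cup}}H$. Moreover, if $G$ or $H$ fails $P$, then $G\mathbin{\overline{\cup}}H$ also fails $P$.
   Context: Digraphs are finite and loopless. $G\mathbin{\dot\cup}H$ is the disjoint union digraph on $V_1\dot\cup V_2$ with edge set $E_1\cup E_2$. $G\mathbin{\overline{\cup}}H$ is the structure on $V_1\dot\cup V_2$ with binary relation $E_1\cup E_2$ together with two unary relations interpreted as $V_1$ and $V_2$. A polymorphism of a structure of arity $k$ is a map $f$ from $k$-tuples of elements to elements such that applying $f$ coordinatewise to $k$ tuples of any relation yields a tuple of that relation. A structure ''has'' a property below if it has polymorphisms satisfying the indicated equations for all values of the variables. Weak NU: an idempotent polymorphism $w$ of arity $n>1$ with $w(y,x,\dots,x)=w(x,y,x,\dots,x)=\dots=w(x,\dots,x,y)$. Taylor: has a weak NU polymorphism. $\operatorname{SD}(\wedge)$: a $3$-ary weak NU $w_1$ and a $4$-ary weak NU $w_2$ with $w_1(y,x,x)=w_2(y,x,x,x)$. Hobby–McKenzie: there are $n\ge0$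 and idempotent ternary polymorphisms $d_0,\dots,d_n,p,e_0,\dots,e_n$ with $x=d_0(x,y,z)$, $e_n(x,y,z)=z$; $d_i(x,y,y)=d_{i+1}(x,y,y)$ and $e_i(x,y,y)=e_{i+1}(x,y,y)$ for even $i<n$; $d_i(x,x,y)=d_{i+1}(x,x,y)$ and $e_i(x,x,y)=e_{i+1}(x,x,y)$ for odd $i<n$; $d_n(x,y,y)=p(x,y,y)$ and $p(x,x,y)=e_0(x,x,y)$; $d_i(x,y,x)=d_{i+1}(x,y,x)$ for odd $i<n$ and $e_j(x,y,x)=e_{j+1}(x,y,x)$ for even $j<n$. $\operatorname{SD}(\vee)$: both $\operatorname{SD}(\wedge)$ and Hobby–McKenzie. Congruence $n$-permutable: ternary polymorphisms $p_0,\dots,p_n$ with $p_0(x,y,z)=x$, $p_i(x,x,y)=p_{i+1}(x,y,y)$ for $i<n$, $p_n(x,y,z)=z$; Maltsev means congruence $2$-permutable. CD: ternary polymorphisms $J_0,\dots,J_n$ with $J_0(x,y,z)=x$, $J_i(x,y,x)=x$, $J_i(x,x,y)=J_{i+1}(x,x,y)$ for even $i<n$, $J_i(x,y,y)=J_{i+1}(x,y,y)$ for odd $i<n$, $J_n(x,y,z)=z$. CM: ternary polymorphisms $s_0,\dots,s_{2n},p$ with $s_0(x,y,z)=x$, $s_i(x,y,x)=x$, $s_i(x,y,y)=s_{i+1}(x,y,y)$ for even $i<2n$, $s_i(x,x,y)=s_{i+1}(x,x,y)$ for odd $i<2n$, $s_{2n}(x,y,y)=p(x,y,y)$, $p(x,x,y)=y$.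 Combined properties (''X and Y'') mean both hold. *)

From Stdlib Require Lists.List.
From mathcomp Require Import all_boot.
Set Implicit Arguments. Unset Strict Implicit. Unset Printing Implicit Defensive.

Record digraph := Digraph {
  dV : finType;
  dE : rel dV;
  dE_loopless : irreflexive dE }.

Record relstr := RelStr {
  rcar : finType;
  redge : rel rcar;
  runary : seq (pred rcar) }.

Definition dstr (G : digraph) : relstr := @RelStr (dV G) (@dE G) [::].

Definition is_left {A B : Type} (u : A + B) : bool :=
  if u is inl _ then true else false.

Definition union_edge (G H : digraph) : rel (dV G + dV H)%type :=
  fun u v => match u, v with
             | inl a, inl b => dE a b
             | inr a, inr b => dE a b
             | _, _ => false
             end.

Definition dunion (G H : digraph) : relstr :=
  @RelStr (dV G + dV H)%type (@union_edge G H) [::].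

Definition ounion (G H : digraph) : relstr :=
  @RelStr (dV G + dV H)%type (@union_edge G H)
    [:: (fun u => is_left u); (fun u => ~~ is_left u)].

Section Pol.
Variable S : relstr.
Local Notation T := (rcar S).

Definition pol (k : nat) (f : {ffun 'I_k -> T} -> T) : Prop :=
  (forall x y : {ffun 'I_k -> T},
      (forall i, redge (x i) (y i)) -> redge (f x) (f y)) /\
  (forall U, Stdlib.Lists.List.In U (runary S) ->
      forall x : {ffun 'I_k -> T}, (forall i, U (x i)) -> U (f x)).

Definition idem (k : nat) (f : {ffun 'I_k -> T} -> T) : Prop :=
  forall x : T, f [ffun _ => x] = x.

Definition ytup (k : nat) (x y : T) (i : 'I_k) : {ffun 'I_k -> T} :=
  [ffun j => if j == i then y else x].

Definition weakNU (n : nat) (w : {ffun 'I_n -> T} -> T) : Prop :=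
  1 < n /\ pol w /\ idem w /\
  forall (x y : T) (i j : 'I_n), w (ytup x y i) = w (ytup x y j).

Definition op3 (f : T -> T -> T -> T) : {ffun 'I_3 -> T} -> T :=
  fun t => f (t ord0) (t (inord 1)) (t (inord 2)).
Definition pol3 (f : T -> T -> T -> T) : Prop := pol (op3 f).
Definition idem3 (f : T -> T -> T -> T) : Prop := forall x, f x x x = x.

Definition Taylor : Prop :=
  exists (n : nat) (w : {ffun 'I_n -> T} -> T), weakNU w.

Definition SDmeet : Prop :=
  exists (w1 : {ffun 'I_3 -> T} -> T) (w2 : {ffun 'I_4 -> T} -> T),
    weakNU w1 /\ weakNU w2 /\
    forall x y : T, w1 (ytup x y ord0) = w2 (ytup x y ord0).

Definition HobbyMcKenzie : Prop :=
  exists (n : nat) (d e : nat -> T -> T -> T -> T) (p : T -> T -> T -> T),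
    (forall i, i <= n -> pol3 (d i) /\ idem3 (d i) /\ pol3 (e i) /\ idem3 (e i)) /\
    pol3 p /\ idem3 p /\
    (forall x y z, d 0 x y z = x) /\
    (forall x y z, e n x y z = z) /\
    (forall i x y, i < n -> ~~ odd i ->
        d i x y y = d i.+1 x y y /\ e i x y y = e i.+1 x y y) /\
    (forall i x y, i < n -> odd i ->
        d i x x y = d i.+1 x x y /\ e i x x y = e i.+1 x x y) /\
    (forall x y, d n x y y = p x y y) /\
    (forall x y, p x x y = e 0 x x y) /\
    (forall i x y, i < n -> odd i -> d i x y x = d i.+1 x y x) /\
    (forall j x y, j < n -> ~~ odd j -> e j x y x = e j.+1 x y x).

Definition SDjoin : Prop := SDmeet /\ HobbyMcKenzie.

Definition CnP (n : nat) : Prop :=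
  exists p : nat -> T -> T -> T -> T,
    (forall i, i <= n -> pol3 (p i)) /\
    (forall x y z, p 0 x y z = x) /\
    (forall i x y, i < n -> p i x x y = p i.+1 x y y) /\
    (forall x y z, p n x y z = z).

Definition Maltsev : Prop := CnP 2.

Definition CD : Prop :=
  exists (n : nat) (J : nat -> T -> T -> T -> T),
    (forall i, i <= n -> pol3 (J i)) /\
    (forall x y z, J 0 x y z = x) /\
    (forall i x y, i <= n -> J i x y x = x) /\
    (forall i x y, i < n -> ~~ odd i -> J i x x y = J i.+1 x x y) /\
    (forall i x y, i < n -> odd i -> J i x y y = J i.+1 x y y) /\
    (forall x y z, J n x y z = z).

Definition CM : Prop :=
  exists (n : nat) (s : nat -> T -> T -> T -> T) (p : T -> T -> T -> T),
    (forall i, i <= 2 * n -> pol3 (s i)) /\ pol3 p /\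
    (forall x y z, s 0 x y z = x) /\
    (forall i x y, i <= 2 * n -> s i x y x = x) /\
    (forall i x y, i < 2 * n -> ~~ odd i -> s i x y y = s i.+1 x y y) /\
    (forall i x y, i < 2 * n -> odd i -> s i x x y = s i.+1 x x y) /\
    (forall x y, s (2 * n) x y y = p x y y) /\
    (forall x y, p x x y = y).

End Pol.

Inductive property :=
  | P_Taylor | P_SDmeet | P_HM | P_SDjoin | P_CM | P_CnP | P_CD
  | P_SDjoin_CnP | P_CnP_CM | P_CD_CnP | P_C3P | P_CD_C3P | P_Maltsev
  | P_Arith.

Definition satisfies (P : property) (S : relstr) : Prop :=
  match P with
  | P_Taylor => Taylor S
  | P_SDmeet => SDmeet S
  | P_HM => HobbyMcKenzie S
  | P_SDjoin => SDjoin S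
  | P_CM => CM S
  | P_CnP => exists n, CnP S n
  | P_CD => CD S
  | P_SDjoin_CnP => SDjoin S /\ exists n, CnP S n
  | P_CnP_CM => (exists n, CnP S n) /\ CM S
  | P_CD_CnP => CD S /\ exists n, CnP S n
  | P_C3P => CnP S 3
  | P_CD_C3P => CD S /\ CnP S 3
  | P_Maltsev => Maltsev S
  | P_Arith => CD S /\ Maltsev S
  end.

From mathcomp Require Import all_boot zify.
Set Implicit Arguments. Unset Strict Implicit. Unset Printing Implicit Defensive.

(* On G + H, a term condition is realised by running the terms of G and H on
   one-sided tuples and, on tuples meeting both sides, returning an argument
   chosen from the pattern of sides (a projection, the majority side, or a
   Maltsev-like choice); before combining, the chains of terms are brought to a
   common length and the weak NU operations to a common arity.  Conversely V1 is
   a unary relation of the expanded union isomorphic to G, and every polymorphism preserves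
   it, so polymorphisms restrict to G; likewise for H. *)

Section TernaryOperations.
Variable S : relstr.
Local Notation T := (rcar S).

Definition tuple3 (a b c : T) : {ffun 'I_3 -> T} :=
  [ffun i : 'I_3 => nth a [:: a; b; c] i].

Lemma op3_tuple3 f a b c : op3 f (tuple3 a b c) = f a b c.
Proof. by rewrite /op3 !ffunE !inordK. Qed.

Lemma pol3P f :
  pol3 f <->
  (forall a b c a' b' c', redge a a' -> redge b b' -> redge c c' ->
     redge (f a b c) (f a' b' c')) /\
  (forall U, List.In U (runary S) -> forall a b c, U a -> U b -> U c -> U (f a b c)).
Proof.
split=> [[polE polU]|[polE polU]]; split.
- move=> a b c a' b' c' ea eb ec; rewrite -!op3_tuple3; apply: polE => i.
  by rewrite !ffunE; case: i => [[|[|[|]]]].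
- move=> U U_in a b c Ua Ub Uc; rewrite -op3_tuple3; apply: polU => // i.
  by rewrite !ffunE; case: i => [[|[|[|]]]].
- by move=> x y E; apply: polE; apply: E.
- by move=> U U_in x Ux; apply: polU => //; apply: Ux.
Qed.

Lemma pol3_third : pol3 (fun _ _ z : T => z).
Proof. by apply/pol3P; split=> [a b c a' b' c' _ _ ->|U _ a b c _ _ ->]. Qed.

(* Chains of terms are lengthened by repeating their last term, or, when that
   term is the third projection, by appending third projections. *)
Definition hold_last n0 (f : nat -> T -> T -> T -> T) i := f (minn i n0).

Definition pad_third n0 (f : nat -> T -> T -> T -> T) i : T -> T -> T -> T :=
  if i <= n0 then f i else fun _ _ z => z.

Lemma hold_last_le n0 f i : i <= n0 -> hold_last n0 f i = f i.
Proof. by move=> le_i; rewrite /hold_last (minn_idPl le_i). Qed.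

Lemma hold_last_ge n0 f i : n0 <= i -> hold_last n0 f i = f n0.
Proof. by move=> le_i; rewrite /hold_last (minn_idPr le_i). Qed.

Lemma pad_third_le n0 f i : i <= n0 -> pad_third n0 f i = f i.
Proof. by rewrite /pad_third => ->. Qed.

Lemma pad_third_ge n0 f i x y z :
  (forall x y z, f n0 x y z = z) -> n0 <= i -> pad_third n0 f i x y z = z.
Proof.
rewrite /pad_third => fz le_i; case: leqP => // ge_i.
by have -> : i = n0 by apply/eqP; rewrite eqn_leq ge_i le_i.
Qed.

Lemma pol3_pad_third n0 f i :
  (forall i, i <= n0 -> pol3 (f i)) -> pol3 (pad_third n0 f i).
Proof. by move=> polf; rewrite /pad_third; case: leqP => [/polf|_] //; apply: pol3_third. Qed.

Lemma idem3_pad_third n0 f i :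
  (forall i, i <= n0 -> idem3 (f i)) -> idem3 (pad_third n0 f i).
Proof. by move=> idf; rewrite /pad_third; case: leqP => [/idf|_]. Qed.

Definition HM_chain n (d e : nat -> T -> T -> T -> T) (p : T -> T -> T -> T) : Prop :=
  (forall i, i <= n -> pol3 (d i) /\ idem3 (d i) /\ pol3 (e i) /\ idem3 (e i)) /\
  pol3 p /\ idem3 p /\
  (forall x y z, d 0 x y z = x) /\
  (forall x y z, e n x y z = z) /\
  (forall i x y, i < n -> ~~ odd i ->
      d i x y y = d i.+1 x y y /\ e i x y y = e i.+1 x y y) /\
  (forall i x y, i < n -> odd i ->
      d i x x y = d i.+1 x x y /\ e i x x y = e i.+1 x x y) /\
  (forall x y, d n x y y = p x y y) /\
  (forall x y, p x x y = e 0 x x y) /\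
  (forall i x y, i < n -> odd i -> d i x y x = d i.+1 x y x) /\
  (forall j x y, j < n -> ~~ odd j -> e j x y x = e j.+1 x y x).

Definition CD_chain n (J : nat -> T -> T -> T -> T) : Prop :=
  (forall i, i <= n -> pol3 (J i)) /\
  (forall x y z, J 0 x y z = x) /\
  (forall i x y, i <= n -> J i x y x = x) /\
  (forall i x y, i < n -> ~~ odd i -> J i x x y = J i.+1 x x y) /\
  (forall i x y, i < n -> odd i -> J i x y y = J i.+1 x y y) /\
  (forall x y z, J n x y z = z).

Definition CM_chain n (s : nat -> T -> T -> T -> T) (p : T -> T -> T -> T) : Prop :=
  (forall i, i <= 2 * n -> pol3 (s i)) /\ pol3 p /\
  (forall x y z, s 0 x y z = x) /\
  (forall i x y, i <= 2 * n -> s i x y x = x) /\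
  (forall i x y, i < 2 * n -> ~~ odd i -> s i x y y = s i.+1 x y y) /\
  (forall i x y, i < 2 * n -> odd i -> s i x x y = s i.+1 x x y) /\
  (forall x y, s (2 * n) x y y = p x y y) /\
  (forall x y, p x x y = y).

Lemma HM_chain_pad n0 n d e p : HM_chain n0 d e p -> n0 <= n ->
  HM_chain n (hold_last n0 d) (pad_third n0 e) p.
Proof.
move=> [de_pol [p_pol [p_idem [d0 [en [ev [od [dp [pe [d_od e_ev]]]]]]]]]] le_n.
have e_pol i : i <= n0 -> pol3 (e i) by case/de_pol=> _ [_ []].
have e_idem i : i <= n0 -> idem3 (e i) by case/de_pol=> _ [_ []].
split.
  move=> i _; rewrite /hold_last; have [? [? _]] := de_pol _ (geq_minr i n0).
  by split; [|split; [|split]] => //; [apply: pol3_pad_third|apply: idem3_pad_third].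
do 2 (split=> //).
split; first by move=> x y z; rewrite /hold_last min0n.
split; first by move=> x y z; apply: pad_third_ge.
split.
  move=> i x y lt_i ev_i; case: (ltnP i n0) => [lt_i0|le_i].
    by rewrite !pad_third_le ?(ltnW lt_i0) // !hold_last_le ?(ltnW lt_i0) //; apply: ev.
  by rewrite !hold_last_ge ?(leqW le_i) // !pad_third_ge ?(leqW le_i).
split.
  move=> i x y lt_i od_i; case: (ltnP i n0) => [lt_i0|le_i].
    by rewrite !pad_third_le ?(ltnW lt_i0) // !hold_last_le ?(ltnW lt_i0) //; apply: od.
  by rewrite !hold_last_ge ?(leqW le_i) // !pad_third_ge ?(leqW le_i).
split; first by move=> x y; rewrite hold_last_ge.
split; first by move=> x y; rewrite pad_third_le.
split.
  move=> i x y lt_i od_i; case: (ltnP i n0) => [lt_i0|le_i].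
    by rewrite !hold_last_le ?(ltnW lt_i0) //; apply: d_od.
  by rewrite !hold_last_ge ?(leqW le_i).
move=> i x y lt_i ev_i; case: (ltnP i n0) => [lt_i0|le_i].
  by rewrite !pad_third_le ?(ltnW lt_i0) //; apply: e_ev.
by rewrite !pad_third_ge ?(leqW le_i).
Qed.

Lemma CD_chain_pad n0 n J : CD_chain n0 J -> n0 <= n -> CD_chain n (pad_third n0 J).
Proof.
move=> [J_pol [J0 [Jxyx [ev [od Jn]]]]] le_n.
split; first by move=> i _; apply: pol3_pad_third.
split; first by move=> x y z; rewrite pad_third_le.
split; first by move=> i x y _; rewrite /pad_third; case: leqP => // /Jxyx.
split.
  move=> i x y lt_i ev_i; case: (ltnP i n0) => [lt_i0|le_i].
    by rewrite !pad_third_le ?(ltnW lt_i0) //; apply: ev.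
  by rewrite !pad_third_ge ?(leqW le_i).
split; last by move=> x y z; rewrite pad_third_ge.
move=> i x y lt_i od_i; case: (ltnP i n0) => [lt_i0|le_i].
  by rewrite !pad_third_le ?(ltnW lt_i0) //; apply: od.
by rewrite !pad_third_ge ?(leqW le_i).
Qed.

Lemma CM_chain_pad n0 n s p : CM_chain n0 s p -> n0 <= n ->
  CM_chain n (hold_last (2 * n0) s) p.
Proof.
move=> [s_pol [p_pol [s0 [sxyx [ev [od [sp pxxy]]]]]]] le_n.
have le_2n : 2 * n0 <= 2 * n by rewrite leq_mul2l le_n orbT.
split; first by move=> i _; apply: s_pol; apply: geq_minr.
split=> //.
split; first by move=> x y z; rewrite /hold_last min0n.
split; first by move=> i x y _; apply: sxyx; apply: geq_minr.
split.
  move=> i x y lt_i ev_i; case: (ltnP i (2 * n0)) => [lt_i0|le_i].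
    by rewrite !hold_last_le ?(ltnW lt_i0) //; apply: ev.
  by rewrite !hold_last_ge ?(leqW le_i).
split.
  move=> i x y lt_i od_i; case: (ltnP i (2 * n0)) => [lt_i0|le_i].
    by rewrite !hold_last_le ?(ltnW lt_i0) //; apply: od.
  by rewrite !hold_last_ge ?(leqW le_i).
by split=> // x y; rewrite hold_last_ge.
Qed.

Lemma CnP_pad n0 n : CnP S n0 -> n0 <= n -> CnP S n.
Proof.
move=> [p [p_pol [p0 [step pn]]]] le_n; exists (pad_third n0 p).
split; first by move=> i _; apply: pol3_pad_third.
split; first by move=> x y z; rewrite pad_third_le.
split; last by move=> x y z; rewrite pad_third_ge.
move=> i x y lt_i; case: (ltnP i n0) => [lt_i0|le_i].
  by rewrite !pad_third_le ?(ltnW lt_i0) //; apply: step.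
by rewrite !pad_third_ge ?(leqW le_i).
Qed.

End TernaryOperations.

(* [r d] is a left inverse of the embedding [e]; the default [d] is where it
   sends points outside the image. *)
Section Retraction.
Variables (S R : relstr) (e : rcar R -> rcar S) (r : rcar R -> rcar S -> rcar R)
  (U : pred (rcar S)).
Hypotheses (e_edge : forall a b, redge (e a) (e b) = redge a b)
  (r_e : forall d a, r d (e a) = a)
  (U_unary : List.In U (runary S))
  (U_image : forall u, U u <-> exists a, u = e a)
  (R_no_unary : runary R = [::]).

Lemma r_default d1 d2 u : U u -> r d1 u = r d2 u.
Proof. by case/U_image=> a ->; rewrite !r_e. Qed.

Definition restrict3 (f : rcar S -> rcar S -> rcar S -> rcar S) a b c :=
  r a (f (e a) (e b) (e c)).

Lemma restrict3E f a b c t : f (e a) (e b) (e c) = e t -> restrict3 f a b c = t.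
Proof. by rewrite /restrict3 => ->. Qed.

Lemma restrict3_congr f g a b c b' c' :
  f (e a) (e b) (e c) = g (e a) (e b') (e c') -> restrict3 f a b c = restrict3 g a b' c'.
Proof. by rewrite /restrict3 => ->. Qed.

Lemma pol3_restrict3 f : pol3 f -> pol3 (restrict3 f).
Proof.
case/pol3P=> f_edge f_U; apply/pol3P; split; last by rewrite R_no_unary.
move=> a b c a' b' c' ea eb ec.
have image u v w : exists t, f (e u) (e v) (e w) = e t.
  by apply/U_image/f_U; rewrite ?U_image; eauto.
have [t ft] := image a b c; have [t' ft'] := image a' b' c'.
rewrite (restrict3E ft) (restrict3E ft') -e_edge -ft -ft'.
by apply: f_edge; rewrite e_edge.
Qed.

Lemma idem3_restrict3 f : idem3 f -> idem3 (restrict3 f).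
Proof. by move=> f_idem a; apply: restrict3E; rewrite f_idem. Qed.

Definition restrict n (w : {ffun 'I_n -> rcar S} -> rcar S) (i0 : 'I_n)
    (x : {ffun 'I_n -> rcar R}) : rcar R :=
  r (x i0) (w [ffun i => e (x i)]).

Lemma pol_image n (w : {ffun 'I_n -> rcar S} -> rcar S) (x : {ffun 'I_n -> rcar R}) :
  pol w -> exists t, w [ffun i => e (x i)] = e t.
Proof. by case=> _ w_U; apply/U_image/w_U => // i; rewrite ffunE U_image; eauto. Qed.

Lemma restrictE n (w : {ffun 'I_n -> rcar S} -> rcar S) i0 (x : {ffun 'I_n -> rcar R}) t :
  w [ffun i => e (x i)] = e t -> restrict w i0 x = t.
Proof. by rewrite /restrict => ->. Qed.

Lemma restrict_ytup n (w : {ffun 'I_n -> rcar S} -> rcar S) i0 x y i :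
  restrict w i0 (ytup x y i) = r (ytup x y i i0) (w (ytup (e x) (e y) i)).
Proof.
rewrite /restrict; congr (r _ (w _)).
by apply/ffunP=> k; rewrite !ffunE; case: (k == i).
Qed.

Lemma U_ytup n (w : {ffun 'I_n -> rcar S} -> rcar S) x y i :
  pol w -> U (w (ytup (e x) (e y) i)).
Proof. by case=> _ w_U; apply: w_U => // k; rewrite ffunE U_image; case: (k == i); eauto. Qed.

Lemma weakNU_restrict n (w : {ffun 'I_n -> rcar S} -> rcar S) i0 :
  weakNU w -> weakNU (restrict w i0).
Proof.
move=> [n_gt1 [w_pol [w_idem w_nu]]]; split=> //; split; last split.
- split; last by rewrite R_no_unary.
  move=> x y xy; have [t wt] := pol_image x w_pol; have [t' wt'] := pol_image y w_pol.
  rewrite (restrictE _ wt) (restrictE _ wt') -e_edge -wt -wt'.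
  by apply: w_pol.1 => i; rewrite !ffunE e_edge.
- move=> a; apply: restrictE.
  by rewrite -[RHS](w_idem (e a)); congr w; apply/ffunP=> i; rewrite !ffunE.
- move=> x y i j; rewrite !restrict_ytup (w_nu _ _ i j).
  exact/r_default/U_ytup.
Qed.

Lemma restrict_Taylor : Taylor S -> Taylor R.
Proof.
move=> [n [w w_nu]]; have i0 : 'I_n by exists 0; case: w_nu => /ltnW.
by exists n, (restrict w i0); apply: weakNU_restrict.
Qed.

Lemma restrict_SDmeet : SDmeet S -> SDmeet R.
Proof.
move=> [w1 [w2 [w1_nu [w2_nu w12]]]].
exists (restrict w1 ord0), (restrict w2 ord0); do 2 (split; first exact: weakNU_restrict).
move=> x y; rewrite !restrict_ytup w12.
by apply: r_default; apply: U_ytup; case: w2_nu => _ [].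
Qed.

Lemma restrict_HM : HobbyMcKenzie S -> HobbyMcKenzie R.
Proof.
move=> [n [d [e' [p [de_ok [p_pol [p_idem [d0 [en [ev [od [dp [pe [d_od e_ev]]]]]]]]]]]]]].
exists n, (fun i => restrict3 (d i)), (fun i => restrict3 (e' i)), (restrict3 p).
split.
  move=> i le_i; have [d_pol [d_idem [e_pol e_idem]]] := de_ok i le_i.
  by split; [|split; [|split]]; (apply: pol3_restrict3 || apply: idem3_restrict3).
split; first exact: pol3_restrict3.
split; first exact: idem3_restrict3.
split; first by move=> x y z; apply: restrict3E; rewrite d0.
split; first by move=> x y z; apply: restrict3E; rewrite en.
split.
  move=> i x y lt_i ev_i; have [? ?] := ev i (e x) (e y) lt_i ev_i.
  by split; apply: restrict3_congr.
split.
  move=> i x y lt_i od_i; have [? ?] := od i (e x) (e y) lt_i od_i.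
  by split; apply: restrict3_congr.
do 2 (split; first by move=> x y; apply: restrict3_congr).
split; first by move=> i x y lt_i od_i; apply: restrict3_congr; apply: d_od.
by move=> i x y lt_i ev_i; apply: restrict3_congr; apply: e_ev.
Qed.

Lemma restrict_CnP n : CnP S n -> CnP R n.
Proof.
move=> [p [p_pol [p0 [step pn]]]].
exists (fun i => restrict3 (p i)); split; first by move=> i /p_pol /pol3_restrict3.
split; first by move=> x y z; apply: restrict3E; rewrite p0.
split; first by move=> i x y lt_i; apply: restrict3_congr; apply: step.
by move=> x y z; apply: restrict3E; rewrite pn.
Qed.

Lemma restrict_CD : CD S -> CD R.
Proof.
move=> [n [J [J_pol [J0 [Jxyx [ev [od Jn]]]]]]].
exists n, (fun i => restrict3 (J i)); split; first by move=> i /J_pol /pol3_restrict3.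
split; first by move=> x y z; apply: restrict3E; rewrite J0.
split; first by move=> i x y le_i; apply: restrict3E; rewrite Jxyx.
split; first by move=> i x y lt_i ev_i; apply: restrict3_congr; apply: ev.
split; first by move=> i x y lt_i od_i; apply: restrict3_congr; apply: od.
by move=> x y z; apply: restrict3E; rewrite Jn.
Qed.

Lemma restrict_CM : CM S -> CM R.
Proof.
move=> [n [s [p [s_pol [p_pol [s0 [sxyx [ev [od [sp pxxy]]]]]]]]]].
exists n, (fun i => restrict3 (s i)), (restrict3 p).
split; first by move=> i /s_pol /pol3_restrict3.
split; first exact: pol3_restrict3.
split; first by move=> x y z; apply: restrict3E; rewrite s0.
split; first by move=> i x y le_i; apply: restrict3E; rewrite sxyx.
split; first by move=> i x y lt_i ev_i; apply: restrict3_congr; apply: ev.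
split; first by move=> i x y lt_i od_i; apply: restrict3_congr; apply: od.
split; first by move=> x y; apply: restrict3_congr.
by move=> x y; apply: restrict3E; rewrite pxxy.
Qed.

Lemma satisfies_restrict P : satisfies P S -> satisfies P R.
Proof.
have ex_CnP : (exists n, CnP S n) -> exists n, CnP R n.
  by case=> n /restrict_CnP; exists n.
have := restrict_Taylor; have := restrict_SDmeet; have := restrict_HM.
have := restrict_CM; have := restrict_CD; have := @restrict_CnP 2; have := @restrict_CnP 3.
by case: P => /=; rewrite /Maltsev /SDjoin; tauto.
Qed.

End Retraction.

Lemma iter_period (T : Type) (f : T -> T) c i p :
  iter (i + p) f c = iter i f c ->
  forall t k, i <= t -> iter (t + k * p) f c = iter t f c.
Proof.
move=> per t k le_it; elim: k => [|k IHk]; first by rewrite addn0.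
have -> : t + k.+1 * p = (t + k * p - i) + (i + p) by rewrite mulSn; lia.
by rewrite iterD per -iterD subnK ?IHk // (leq_trans le_it (leq_addr _ _)).
Qed.

Lemma iter_fact_idem (T : finType) (f : T -> T) c :
  iter #|T|`! f (iter #|T|`! f c) = iter #|T|`! f c.
Proof.
set N := #|T|.
have [i [p [p_gt0 [le_ipN per]]]] :
    exists i p, 0 < p /\ i + p <= N /\ iter (i + p) f c = iter i f c.
  have : ~~ injectiveb (fun k : 'I_N.+1 => iter k f c).
    by apply/injectiveP=> /leq_card; rewrite card_ord ltnn.
  case/injectivePn=> j [k ne_jk eq_jk].
  have [lt_jk|lt_kj|eq_jk'] := ltngtP j k; last by rewrite (val_inj eq_jk') eqxx in ne_jk.
  - exists j, (k - j); rewrite subnKC ?(ltnW lt_jk) //.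
    by have := ltn_ord k; split; [lia|split; [lia|]].
  - exists k, (j - k); rewrite subnKC ?(ltnW lt_kj) //.
    by have := ltn_ord j; split; [lia|split; [lia|]].
have p_dvd : p %| N`! by apply: dvdn_fact; rewrite p_gt0 /=; lia.
have le_i : i <= N`! by apply: leq_trans (fact_geq N); lia.
by rewrite -iterD -{2}(divnK p_dvd) (iter_period per).
Qed.

(* A weak NU operation of arity m yields weak NU operations of every arity
   j * K + 1 (j > 0) for a fixed K: iterating the operation in a tree of depth
   L = |T|! gives arity m ^ L = K + 1 and, on near-unanimous tuples, the
   idempotent map iter L (w (_, x, .., x)); chaining j such trees along one
   shared input keeps that value. *)
Section FlexibleArity.
Variable S : relstr.
Local Notation T := (rcar S).

(* Terms are handled as operations on infinite sequences that read only a
   finite prefix ([stream_local]), so that composing them needs no casts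
   between ordinal types. *)
Definition stream_op := (nat -> T) -> T.

Definition stream_pol n (F : stream_op) :=
  (forall x y : nat -> T, (forall k, k < n -> redge (x k) (y k)) -> redge (F x) (F y)) /\
  (forall U, List.In U (runary S) ->
     forall x : nat -> T, (forall k, k < n -> U (x k)) -> U (F x)).

Definition stream_local n (F : stream_op) :=
  forall x y : nat -> T, (forall k, k < n -> x k = y k) -> F x = F y.

Definition stream_idem (F : stream_op) := forall a, F (fun _ => a) = a.

Definition stream_ytup (x y : T) (p : nat) : nat -> T := fun k => if k == p then y else x.

Variables (m : nat) (w : {ffun 'I_m -> T} -> T).
Hypothesis w_nu : weakNU w.

Definition W : stream_op := fun x => w [ffun i : 'I_m => x i].

Lemma m_gt1 : 1 < m. Proof. by case: w_nu. Qed.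

Lemma W_pol : stream_pol m W.
Proof.
case: w_nu => _ [[w_edge w_U] _]; split.
  by move=> x y xy; apply: w_edge => i; rewrite !ffunE; apply: xy.
by move=> U U_in x Ux; apply: w_U => // i; rewrite !ffunE; apply: Ux.
Qed.

Lemma W_local : stream_local m W.
Proof. by move=> x y xy; rewrite /W; congr w; apply/ffunP=> i; rewrite !ffunE xy. Qed.

Lemma W_idem : stream_idem W.
Proof. by case: w_nu => _ [_ [w_idem _]] a; rewrite /W w_idem. Qed.

Lemma W_ytup x y p q : p < m -> q < m -> W (stream_ytup x y p) = W (stream_ytup x y q).
Proof.
case: w_nu => _ [_ [_ w_eq]] lt_p lt_q.
have W_ytupE r (lt_r : r < m) : W (stream_ytup x y r) = w (ytup x y (Ordinal lt_r)).
  by rewrite /W; congr w; apply/ffunP=> i; rewrite !ffunE.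
by rewrite (W_ytupE _ lt_p) (W_ytupE _ lt_q).
Qed.

Definition unary_part x c := W (stream_ytup x c 0).

Fixpoint tree d : stream_op :=
  if d is d'.+1 then fun x => W (fun i => tree d' (fun k => x (i * m ^ d' + k)))
  else fun x => x 0.

Lemma tree_index d i k : i < m -> k < m ^ d -> i * m ^ d + k < m ^ d.+1.
Proof. by move=> lt_i lt_k; rewrite expnS; nia. Qed.

Lemma tree_pol d : stream_pol (m ^ d) (tree d).
Proof.
elim: d => [|d [IH_edge IH_U]] /=.
  by split=> [x y xy|U _ x Ux]; [apply: xy|apply: Ux].
split.
  move=> x y xy; apply: W_pol.1 => i lt_i; apply: IH_edge => k lt_k.
  exact/xy/tree_index.
move=> U U_in x Ux; apply: W_pol.2 => // i lt_i; apply: IH_U => // k lt_k.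
exact/Ux/tree_index.
Qed.

Lemma tree_local d : stream_local (m ^ d) (tree d).
Proof.
elim: d => [|d IH] x y xy /=; first exact: xy.
by apply: W_local => i lt_i; apply: IH => k lt_k; apply/xy/tree_index.
Qed.

Lemma tree_idem d : stream_idem (tree d).
Proof.
elim: d => [|d IH] a //=.
by rewrite -{2}(W_idem a); apply: W_local => i _; apply: IH.
Qed.

Lemma tree_ytup d x y p : p < m ^ d -> tree d (stream_ytup x y p) = iter d (unary_part x) y.
Proof.
elim: d p => [|d IH] p lt_p /=.
  by move: lt_p; rewrite expn0 ltnS leqn0 => /eqP ->; rewrite /stream_ytup eqxx.
have md_gt0 : 0 < m ^ d by rewrite expn_gt0 (ltnW m_gt1).
set q := p %/ m ^ d; set s := p %% m ^ d.
have lt_q : q < m by rewrite /q ltn_divLR // -expnS.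
have lt_s : s < m ^ d by rewrite /s ltn_pmod.
have def_p : p = q * m ^ d + s by rewrite /q /s -divn_eq.
rewrite (W_local (y := stream_ytup x (iter d (unary_part x) y) q)).
  by rewrite (W_ytup _ _ lt_q (ltnW m_gt1)).
move=> i lt_i; rewrite /stream_ytup; case: eqP => [->|ne_iq].
  by rewrite -(IH s lt_s); apply: tree_local => k lt_k; rewrite /stream_ytup def_p eqn_add2l.
rewrite -{2}(tree_idem d x); apply: tree_local => k lt_k; rewrite /stream_ytup.
case: eqP => // eq_p; case: ne_iq.
by rewrite /q -eq_p divnMDl // divn_small // addn0.
Qed.

Definition L := #|T|`!.
Definition K := (m ^ L).-1.
Definition V := tree L.

Lemma m_pow_L : m ^ L = K.+1.
Proof. by rewrite /K prednK // expn_gt0 (ltnW m_gt1). Qed.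

Lemma K_gt0 : 0 < K.
Proof.
have : 1 < m ^ L by rewrite -{1}(expn0 m) ltn_exp2l ?m_gt1 // /L fact_gt0.
by rewrite m_pow_L.
Qed.

Lemma V_pol : stream_pol K.+1 V. Proof. by rewrite -m_pow_L; apply: tree_pol. Qed.
Lemma V_local : stream_local K.+1 V. Proof. by rewrite -m_pow_L; apply: tree_local. Qed.

Lemma V_ytup x y p : p < K.+1 -> V (stream_ytup x y p) = iter L (unary_part x) y.
Proof. by rewrite -m_pow_L; apply: tree_ytup. Qed.

Fixpoint chain j : stream_op :=
  if j is j'.+1 then
    fun x => V (fun i => if i == 0 then chain j' x else x (j' * K + i))
  else fun x => x 0.

Lemma chain_pol j : stream_pol (j * K).+1 (chain j).
Proof.
elim: j => [|j [IH_edge IH_U]] /=.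
  by split=> [x y xy|U _ x Ux]; [apply: xy|apply: Ux].
split.
  move=> x y xy; apply: V_pol.1 => i lt_i; case: eqP => _.
    by apply: IH_edge => k lt_k; apply: xy; rewrite mulSn; lia.
  by apply: xy; rewrite mulSn; lia.
move=> U U_in x Ux; apply: V_pol.2 => // i lt_i; case: eqP => _.
  by apply: IH_U => // k lt_k; apply: Ux; rewrite mulSn; lia.
by apply: Ux; rewrite mulSn; lia.
Qed.

Lemma chain_local j : stream_local (j * K).+1 (chain j).
Proof.
elim: j => [|j IH] x y xy /=; first exact: xy.
apply: V_local => i lt_i; case: eqP => _.
  by apply: IH => k lt_k; apply: xy; rewrite mulSn; lia.
by apply: xy; rewrite mulSn; lia.
Qed.

Lemma chain_idem j : stream_idem (chain j).
Proof.
elim: j => [|j IH] a //=.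
transitivity (V (fun _ => a)); last exact: tree_idem.
apply: V_local => i _.
by case: eqP => // _; rewrite IH.
Qed.

Lemma chain_ytup j x y p : p < (j * K).+1 ->
  chain j (stream_ytup x y p) = if j == 0 then y else iter L (unary_part x) y.
Proof.
elim: j p => [|j IH] p lt_p /=.
  by move: lt_p; rewrite mul0n ltnS leqn0 => /eqP ->; rewrite /stream_ytup eqxx.
have [le_p|gt_p] := leqP p (j * K).
  rewrite (V_local (y := stream_ytup x (chain j (stream_ytup x y p)) 0)).
    by rewrite V_ytup // IH //; case: (j == 0); rewrite ?iter_fact_idem.
  move=> i lt_i; rewrite /stream_ytup; case: eqP => // ne_i0.
  by case: eqP => // eq_p; lia.
set i0 := p - j * K.
have lt_i0 : 0 < i0 < K.+1 by move: lt_p; rewrite mulSn /i0; lia.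
rewrite (V_local (y := stream_ytup x y i0)); first by apply: V_ytup; case/andP: lt_i0.
move=> i lt_i; rewrite /stream_ytup; case: eqP => [->|ne_i0].
  rewrite (_ : (0 == i0) = false); last by case: i0 lt_i0.
  transitivity (chain j (fun _ => x)); last exact: chain_idem.
  apply: chain_local => k lt_k.
  by rewrite /stream_ytup; case: eqP => // eq_p; lia.
by congr (if _ then _ else _); apply/eqP/eqP; rewrite /i0; lia.
Qed.

Lemma weakNU_chain j : 0 < j ->
  weakNU (fun x : {ffun 'I_(j * K).+1 -> T} => chain j (fun k => x (inord k))).
Proof.
move=> j_gt0; have [chain_edge chain_U] := chain_pol j.
split; first by rewrite ltnS muln_gt0 j_gt0 K_gt0.
split; first split.
- by move=> x y xy; apply: chain_edge => k _; apply: xy.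
- by move=> U U_in x Ux; apply: chain_U => // k _; apply: Ux.
split.
  move=> a; transitivity (chain j (fun _ => a)); last exact: chain_idem.
  by apply: chain_local => k _; rewrite ffunE.
move=> x y p q.
have ytupE (r : 'I_(j * K).+1) :
    chain j (fun k => ytup x y r (inord k)) = chain j (stream_ytup x y r).
  apply: chain_local => k lt_k; rewrite ffunE /stream_ytup.
  by congr (if _ then _ else _); apply/eqP/eqP => [<-|->]; rewrite ?inordK // inord_val.
by rewrite !ytupE !chain_ytup.
Qed.

End FlexibleArity.

Lemma Taylor_weakNU_arities (S : relstr) : Taylor S ->
  exists K, 0 < K /\
  forall j, 0 < j -> exists w : {ffun 'I_(j * K).+1 -> rcar S} -> rcar S, weakNU w.
Proof.
move=> [m [w w_nu]]; exists (K S m); split; first exact: K_gt0 w_nu.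
by move=> j j_gt0; exists (fun x => chain w j (fun k => x (inord k))); apply: weakNU_chain.
Qed.

Section Union.
Variables (G H : digraph) (us : seq (pred (dV G + dV H)%type)).
Hypothesis us_side : forall U, List.In U us ->
  forall u v : (dV G + dV H)%type, is_left u = is_left v -> U u = U v.

Definition side_union : relstr := @RelStr (dV G + dV H)%type (@union_edge G H) us.
Local Notation T := (rcar side_union).

Lemma union_edge_side (u v : T) : union_edge u v -> is_left u = is_left v.
Proof. by case: u; case: v. Qed.

Definition by_side (s : bool -> bool -> bool -> nat) (a b c : T) : T :=
  match s (is_left a) (is_left b) (is_left c) with 0 => a | 1 => b | _ => c end.

Definition union3 (fG : dV G -> dV G -> dV G -> dV G) (fH : dV H -> dV H -> dV H -> dV H)
    s (a b c : T) : T :=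
  match a, b, c with
  | inl a, inl b, inl c => inl (fG a b c)
  | inr a, inr b, inr c => inr (fH a b c)
  | _, _, _ => by_side s a b c
  end.

Lemma pol3_union3 fG fH s : pol3 (S := dstr G) fG -> pol3 (S := dstr H) fH ->
  pol3 (S := side_union) (union3 fG fH s).
Proof.
move=> /pol3P [fG_edge _] /pol3P [fH_edge _]; apply/pol3P; split.
- move=> [a|a] [b|b] [c|c] [a'|a'] [b'|b'] [c'|c'] //= ea eb ec; rewrite /by_side /=;
    try (case: (s _ _ _) => [|[|?]] //); [exact: fG_edge|exact: fH_edge].
- move=> U U_in [a|a] [b|b] [c|c] //= Ua Ub Uc; rewrite /by_side /=;
    try (case: (s _ _ _) => [|[|?]] //).
  + by rewrite (us_side U_in (v := inl a)).
  + by rewrite (us_side U_in (v := inr a)).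
Qed.

Lemma idem3_union3 fG fH s : idem3 (S := dstr G) fG -> idem3 (S := dstr H) fH ->
  idem3 (S := side_union) (union3 fG fH s).
Proof. by move=> fG_idem fH_idem [a|a] /=; rewrite ?fG_idem ?fH_idem. Qed.

Definition first_side : bool -> bool -> bool -> nat := fun _ _ _ => 0.
Definition third_side : bool -> bool -> bool -> nat := fun _ _ _ => 2.
Definition majority_side : bool -> bool -> bool -> nat :=
  fun a b c => if a == b then 0 else if a == c then 0 else 1.
Definition maltsev_side : bool -> bool -> bool -> nat :=
  fun a b c => if a == b then 2 else 0.

Ltac sides3 := move=> [?|?] [?|?] [?|?]; rewrite /= /by_side /=.
Ltac sides2 := move=> [?|?] [?|?]; rewrite /= /by_side /=.

Lemma union_HM_chain n dG eG pG dH eH pH :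
  HM_chain (S := dstr G) n dG eG pG -> HM_chain (S := dstr H) n dH eH pH ->
  HM_chain (S := side_union) n (fun i => union3 (dG i) (dH i) first_side)
    (fun i => union3 (eG i) (eH i) third_side) (union3 pG pH maltsev_side).
Proof.
move=> [G_ok [G_ppol [G_pidem [G_d0 [G_en [G_ev [G_od [G_dp [G_pe [G_dod G_eev]]]]]]]]]].
move=> [H_ok [H_ppol [H_pidem [H_d0 [H_en [H_ev [H_od [H_dp [H_pe [H_dod H_eev]]]]]]]]]].
split.
  move=> i le_i; have [? [? [? ?]]] := G_ok i le_i; have [? [? [? ?]]] := H_ok i le_i.
  by split; [apply: pol3_union3|split; [apply: idem3_union3|
    split; [apply: pol3_union3|apply: idem3_union3]]].
split; first exact: pol3_union3.
split; first exact: idem3_union3.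
split; first by sides3; rewrite ?G_d0 ?H_d0.
split; first by sides3; rewrite ?G_en ?H_en.
split.
  move=> i [x|x] [y|y] lt_i ev_i; rewrite /= /by_side //=;
    [have [-> ->] := G_ev i x y lt_i ev_i|have [-> ->] := H_ev i x y lt_i ev_i] => //.
split.
  move=> i [x|x] [y|y] lt_i od_i; rewrite /= /by_side //=;
    [have [-> ->] := G_od i x y lt_i od_i|have [-> ->] := H_od i x y lt_i od_i] => //.
split; first by sides2; rewrite ?G_dp ?H_dp.
split; first by sides2; rewrite ?G_pe ?H_pe.
split; first by move=> i [x|x] [y|y] lt_i od_i; rewrite /= /by_side //=
  ?(G_dod i x y lt_i od_i) ?(H_dod i x y lt_i od_i).
by move=> i [x|x] [y|y] lt_i ev_i; rewrite /= /by_side //=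
  ?(G_eev i x y lt_i ev_i) ?(H_eev i x y lt_i ev_i).
Qed.

Lemma union_CM_chain n sG pG sH pH :
  CM_chain (S := dstr G) n sG pG -> CM_chain (S := dstr H) n sH pH ->
  CM_chain (S := side_union) n (fun i => union3 (sG i) (sH i) first_side)
    (union3 pG pH maltsev_side).
Proof.
move=> [G_pol [G_ppol [G0 [Gxyx [G_ev [G_od [G_sp G_pxxy]]]]]]].
move=> [H_pol [H_ppol [H0 [Hxyx [H_ev [H_od [H_sp H_pxxy]]]]]]].
split; first by move=> i le_i; apply: pol3_union3; [apply: G_pol|apply: H_pol].
split; first exact: pol3_union3.
split; first by sides3; rewrite ?G0 ?H0.
split; first by move=> i [x|x] [y|y] le_i; rewrite /= /by_side //= ?Gxyx ?Hxyx.
split.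
  by move=> i [x|x] [y|y] lt_i ev_i; rewrite /= /by_side //=
    ?(G_ev i x y lt_i ev_i) ?(H_ev i x y lt_i ev_i).
split.
  by move=> i [x|x] [y|y] lt_i od_i; rewrite /= /by_side //=
    ?(G_od i x y lt_i od_i) ?(H_od i x y lt_i od_i).
split; first by sides2; rewrite ?G_sp ?H_sp.
by sides2; rewrite ?G_pxxy ?H_pxxy.
Qed.

(* On mixed tuples: the first projection at the start of the chain, the third
   at its end, and in between the majority of sides; the chain length must be
   even for the last step to be an odd-indexed one. *)
Definition CD_side n i :=
  if i == 0 then first_side else if n <= i then third_side else majority_side.

Lemma union_CD_chain n JG JH : ~~ odd n -> 0 < n ->
  CD_chain (S := dstr G) n JG -> CD_chain (S := dstr H) n JH ->
  CD_chain (S := side_union) n (fun i => union3 (JG i) (JH i) (CD_side n i)).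
Proof.
move=> n_even n_gt0 [G_pol [G0 [Gxyx [G_ev [G_od Gn]]]]] [H_pol [H0 [Hxyx [H_ev [H_od Hn]]]]].
split; first by move=> i le_i; apply: pol3_union3; [apply: G_pol|apply: H_pol].
split; first by sides3; rewrite ?G0 ?H0.
split.
  move=> i [x|x] [y|y] le_i; rewrite /= /by_side //= ?Gxyx ?Hxyx //;
  by rewrite /CD_side; case: (i == 0) => //; case: (n <= i).
split.
  move=> i x y lt_i ev_i.
  have lt_Si : i.+1 < n.
    rewrite ltn_neqAle lt_i andbT; apply: contraNneq n_even => <-.
    by rewrite /= ev_i.
  have G_step x' y' := G_ev i x' y' lt_i ev_i; have H_step x' y' := H_ev i x' y' lt_i ev_i.
  move: x y; rewrite /CD_side leqNgt lt_i leqNgt lt_Si /=.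
  by case: (i == 0); sides2; rewrite ?G_step ?H_step.
split.
  move=> i x y lt_i od_i.
  have i_neq0 : (i == 0) = false by case: i od_i {lt_i}.
  have G_step x' y' := G_od i x' y' lt_i od_i; have H_step x' y' := H_od i x' y' lt_i od_i.
  move: x y; rewrite /CD_side i_neq0 leqNgt lt_i /=.
  by case: (n <= i.+1); sides2; rewrite ?G_step ?H_step.
have n_neq0 : (n == 0) = false by rewrite eqn0Ngt n_gt0.
by rewrite /CD_side leqnn n_neq0; sides3; rewrite ?Gn ?Hn.
Qed.

Definition CnP_side n i :=
  if n <= i then third_side else if i.+1 == n then maltsev_side else first_side.

Lemma union_CnP n : 1 < n -> CnP (dstr G) n -> CnP (dstr H) n -> CnP side_union n.
Proof.
move=> n_gt1 [pG [G_pol [G0 [G_step Gn]]]] [pH [H_pol [H0 [H_step Hn]]]].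
exists (fun i => union3 (pG i) (pH i) (CnP_side n i)).
split; first by move=> i le_i; apply: pol3_union3; [apply: G_pol|apply: H_pol].
have side0 : CnP_side n 0 = first_side.
  by rewrite /CnP_side leqNgt (ltnW n_gt1) (ltn_eqF n_gt1).
split; first by rewrite side0; sides3; rewrite ?G0 ?H0.
split; last by rewrite /CnP_side leqnn; sides3; rewrite ?Gn ?Hn.
move=> i x y lt_i.
have G_stepi x' y' := G_step i x' y' lt_i; have H_stepi x' y' := H_step i x' y' lt_i.
move: x y; rewrite /CnP_side leqNgt lt_i /=; case: eqP => [last_i|not_last].
  by rewrite -last_i leqnn; sides2; rewrite ?G_stepi ?H_stepi.
have -> : (n <= i.+1) = false by apply/negbTE; rewrite -ltnNge ltn_neqAle lt_i andbT; apply/eqP.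
by case: (i.+2 == n); sides2; rewrite ?G_stepi ?H_stepi.
Qed.

Definition left_part (d : dV G) (u : T) : dV G := if u is inl a then a else d.
Definition right_part (d : dV H) (u : T) : dV H := if u is inr a then a else d.

Section UnionWeakNU.
Variables (n : nat) (wG : {ffun 'I_n.+1 -> dV G} -> dV G)
  (wH : {ffun 'I_n.+1 -> dV H} -> dV H).

Definition first_left (x : {ffun 'I_n.+1 -> T}) := odflt ord0 [pick i | is_left (x i)].

Definition unionW (x : {ffun 'I_n.+1 -> T}) : T :=
  match x ord0 with
  | inl a => if [forall i, is_left (x i)] then inl (wG [ffun i => left_part a (x i)])
             else x (first_left x)
  | inr b => if [forall i, ~~ is_left (x i)] then inr (wH [ffun i => right_part b (x i)])
             else x (first_left x)
  end.

Variant sides_spec (x : {ffun 'I_n.+1 -> T}) : Prop :=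
  | AllLeft (z : 'I_n.+1 -> dV G) of x = [ffun i => inl (z i)]
  | AllRight (z : 'I_n.+1 -> dV H) of x = [ffun i => inr (z i)]
  | Mixed i j of is_left (x i) & ~~ is_left (x j).

Lemma sidesP x : sides_spec x.
Proof.
case: (boolP [forall i, is_left (x i)]) => [/forallP all_l|/forallPn [j r_j]].
  case E: (x ord0) (all_l ord0) => [a|//] _.
  by apply: (AllLeft (z := fun i => left_part a (x i))); apply/ffunP=> i;
    rewrite ffunE; case: (x i) (all_l i).
case: (boolP [forall i, ~~ is_left (x i)]) => [/forallP all_r|/forallPn [i /negbNE l_i]].
  case E: (x ord0) (all_r ord0) => [//|b] _.
  by apply: (AllRight (z := fun i => right_part b (x i))); apply/ffunP=> i;
    rewrite ffunE; case: (x i) (all_r i).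
exact: Mixed l_i r_j.
Qed.

Lemma unionW_inl (z : 'I_n.+1 -> dV G) : unionW [ffun i => inl (z i)] = inl (wG [ffun i => z i]).
Proof.
rewrite /unionW ffunE.
have -> : [forall i, is_left ([ffun i => inl (z i) : T] i)] by apply/forallP=> i; rewrite ffunE.
by congr (inl (wG _)); apply/ffunP=> i; rewrite !ffunE.
Qed.

Lemma unionW_inr (z : 'I_n.+1 -> dV H) : unionW [ffun i => inr (z i)] = inr (wH [ffun i => z i]).
Proof.
rewrite /unionW ffunE.
have -> : [forall i, ~~ is_left ([ffun i => inr (z i) : T] i)] by apply/forallP=> i; rewrite ffunE.
by congr (inr (wH _)); apply/ffunP=> i; rewrite !ffunE.
Qed.

Lemma unionW_mixed (x : {ffun 'I_n.+1 -> T}) i j :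
  is_left (x i) -> ~~ is_left (x j) -> unionW x = x (first_left x).
Proof.
move=> l_i r_j; rewrite /unionW.
have -> : [forall k, is_left (x k)] = false by apply/negbTE/forallPn; exists j.
have -> : [forall k, ~~ is_left (x k)] = false by apply/negbTE/forallPn; exists i; rewrite l_i.
by case: (x ord0).
Qed.

Lemma pol_unionW : pol (S := dstr G) wG -> pol (S := dstr H) wH -> pol (S := side_union) unionW.
Proof.
move=> [wG_edge _] [wH_edge _]; split.
- move=> x y xy; have side k : is_left (x k) = is_left (y k) := union_edge_side (xy k).
  move: xy side; case: (sidesP x) => [z ->|z ->|i j l_i r_j];
    case: (sidesP y) => [z' ->|z' ->|i' j' l_i' r_j'] xy side.
  + by rewrite !unionW_inl; apply: wG_edge => k; move: (xy k); rewrite !ffunE.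
  + by move: (xy ord0); rewrite !ffunE.
  + by move: (side j') r_j'; rewrite ffunE => <-.
  + by move: (xy ord0); rewrite !ffunE.
  + by rewrite !unionW_inr; apply: wH_edge => k; move: (xy k); rewrite !ffunE.
  + by move: (side i') l_i'; rewrite ffunE => <-.
  + by move: (side j) r_j; rewrite ffunE => ->.
  + by move: (side i) l_i; rewrite ffunE => ->.
  + rewrite (unionW_mixed l_i r_j) (unionW_mixed l_i' r_j').
    by have -> : first_left y = first_left x by rewrite /first_left (eq_pick side).
- move=> U U_in x; case: (sidesP x) => [z ->|z ->|i j l_i r_j] Ux.
  + by rewrite unionW_inl (us_side U_in (v := inl (z ord0))) //; move: (Ux ord0); rewrite ffunE.
  + by rewrite unionW_inr (us_side U_in (v := inr (z ord0))) //; move: (Ux ord0); rewrite ffunE.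
  + by rewrite (unionW_mixed l_i r_j).
Qed.

Lemma idem_unionW : idem (S := dstr G) wG -> idem (S := dstr H) wH -> idem (S := side_union) unionW.
Proof.
move=> wG_idem wH_idem [a|a].
  by rewrite (unionW_inl (fun _ => a)) wG_idem.
by rewrite (unionW_inr (fun _ => a)) wH_idem.
Qed.

Lemma unionW_mixed_const (x : {ffun 'I_n.+1 -> T}) i j c :
  is_left (x i) -> ~~ is_left (x j) -> (forall k, is_left (x k) -> x k = c) -> unionW x = c.
Proof.
move=> l_i r_j left_c; rewrite (unionW_mixed l_i r_j) left_c // /first_left.
by case: pickP => [//|/(_ i)]; rewrite l_i.
Qed.

(* On a mixed near-unanimous tuple every left entry is the same, so the value
   does not depend on the position of the odd entry. *)
Lemma unionW_ytup (u v : T) (i : 'I_n.+1) : 0 < n ->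
  unionW (ytup u v i) =
    match u, v with
    | inl a, inl b => inl (wG (ytup (S := dstr G) a b i))
    | inr a, inr b => inr (wH (ytup (S := dstr H) a b i))
    | inl a, inr _ | inr _, inl a => inl a
    end.
Proof.
move=> n_gt0; have [k ne_ki] : exists k : 'I_n.+1, k != i.
  case: (eqVneq i ord0) => [->|ne_i0]; last by exists ord0; rewrite eq_sym.
  by exists (inord 1); apply/eqP=> /(congr1 val); rewrite /= inordK.
case: u => a; case: v => b.
- have -> : ytup (S := side_union) (inl a) (inl b) i = [ffun k => inl (ytup (S := dstr G) a b i k)].
    by apply/ffunP=> j; rewrite !ffunE; case: (j == i).
  by rewrite unionW_inl ffunK.
- apply: (unionW_mixed_const (i := k) (j := i)); rewrite ?ffunE ?(negbTE ne_ki) ?eqxx //.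
  by move=> j; rewrite ffunE; case: (j == i).
- apply: (unionW_mixed_const (i := i) (j := k)); rewrite ?ffunE ?(negbTE ne_ki) ?eqxx //.
  by move=> j; rewrite ffunE; case: (j == i).
- have -> : ytup (S := side_union) (inr a) (inr b) i = [ffun k => inr (ytup (S := dstr H) a b i k)].
    by apply/ffunP=> j; rewrite !ffunE; case: (j == i).
  by rewrite unionW_inr ffunK.
Qed.

Lemma weakNU_unionW : weakNU (S := dstr G) wG -> weakNU (S := dstr H) wH ->
  weakNU (S := side_union) unionW.
Proof.
move=> [n_gt1 [wG_pol [wG_idem wG_nu]]] [_ [wH_pol [wH_idem wH_nu]]].
split=> //; split; first exact: pol_unionW.
split; first exact: idem_unionW.
move=> u v i j; rewrite !unionW_ytup //.
by case: u => a; case: v => b; rewrite ?(wG_nu a b i j) ?(wH_nu a b i j).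
Qed.

End UnionWeakNU.

Lemma union_SDmeet : SDmeet (dstr G) -> SDmeet (dstr H) -> SDmeet side_union.
Proof.
move=> [wG1 [wG2 [wG1_nu [wG2_nu wG12]]]] [wH1 [wH2 [wH1_nu [wH2_nu wH12]]]].
exists (unionW wG1 wH1), (unionW wG2 wH2).
do 2 (split; first exact: weakNU_unionW).
by move=> u v; rewrite !unionW_ytup //; case: u => a; case: v => b; rewrite ?wG12 ?wH12.
Qed.

Lemma union_Taylor : Taylor (dstr G) -> Taylor (dstr H) -> Taylor side_union.
Proof.
move=> /Taylor_weakNU_arities [KG [KG_gt0 G_arities]].
move=> /Taylor_weakNU_arities [KH [KH_gt0 H_arities]].
have [wG wG_nu] := G_arities KH KH_gt0; rewrite mulnC in wG wG_nu.
have [wH wH_nu] := H_arities KG KG_gt0.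
by exists (KG * KH).+1, (unionW wG wH); apply: weakNU_unionW.
Qed.

Lemma union_HM : HobbyMcKenzie (dstr G) -> HobbyMcKenzie (dstr H) -> HobbyMcKenzie side_union.
Proof.
move=> [nG [dG [eG [pG G_chain]]]] [nH [dH [eH [pH H_chain]]]].
exists (nG + nH); do 3 eexists; apply: union_HM_chain.
  exact: HM_chain_pad G_chain (leq_addr _ _).
exact: HM_chain_pad H_chain (leq_addl _ _).
Qed.

Lemma union_CM : CM (dstr G) -> CM (dstr H) -> CM side_union.
Proof.
move=> [nG [sG [pG G_chain]]] [nH [sH [pH H_chain]]].
exists (nG + nH); do 2 eexists; apply: union_CM_chain.
  exact: CM_chain_pad G_chain (leq_addr _ _).
exact: CM_chain_pad H_chain (leq_addl _ _).
Qed.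

Lemma union_CD : CD (dstr G) -> CD (dstr H) -> CD side_union.
Proof.
move=> [nG [JG G_chain]] [nH [JH H_chain]].
exists (2 * (nG + nH).+1); eexists; apply: union_CD_chain.
- by rewrite oddM.
- by rewrite muln_gt0.
- by apply: CD_chain_pad G_chain _; lia.
- by apply: CD_chain_pad H_chain _; lia.
Qed.

Lemma union_exCnP : (exists n, CnP (dstr G) n) -> (exists n, CnP (dstr H) n) ->
  exists n, CnP side_union n.
Proof.
move=> [nG G_CnP] [nH H_CnP]; exists (nG + nH).+2; apply: union_CnP => //.
  by apply: CnP_pad G_CnP _; lia.
by apply: CnP_pad H_CnP _; lia.
Qed.

Lemma satisfies_side_union P :
  satisfies P (dstr G) -> satisfies P (dstr H) -> satisfies P side_union.
Proof.
have C2 := @union_CnP 2; have C3 := @union_CnP 3.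
have := union_Taylor; have := union_SDmeet; have := union_HM.
have := union_CM; have := union_CD; have := union_exCnP.
by case: P => /=; rewrite /Maltsev /SDjoin; intuition.
Qed.

End Union.

Theorem theorem4p3 (P : property) (G H : digraph) :
  ((satisfies P (dstr G) /\ satisfies P (dstr H)) ->
     satisfies P (dunion G H) /\ satisfies P (ounion G H)) /\
  ((~ satisfies P (dstr G) \/ ~ satisfies P (dstr H)) -> ~ satisfies P (ounion G H)).
Proof.
split.
  move=> [PG PH]; split; first exact: (satisfies_side_union (us := [::])).
  apply: (satisfies_side_union (us := [:: fun u => is_left u; fun u => ~~ is_left u])) => //.
  by move=> U /= [<-|[<-|[]]] u v ->.
move=> not_PGH P_union; case: not_PGH; apply.
- apply: (satisfies_restrict (S := ounion G H) (R := dstr G) (e := inl)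
    (r := fun d u => if u is inl a then a else d)
    (U := fun u => is_left u)) P_union => //=; first by left.
  by case=> [a|b]; split=> [|[c]] //=; exists a.
- apply: (satisfies_restrict (S := ounion G H) (R := dstr H) (e := inr)
    (r := fun d u => if u is inr b then b else d)
    (U := fun u => ~~ is_left u)) P_union => //=; first by right; left.
  by case=> [a|b]; split=> [|[c]] //=; exists b.
Qed.
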